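(* Let $\Bbbk$ be a field of characteristic zero, let $d\ge 2$ be an integer, and let $A$ be a vector space over $\Bbbk$ (of arbitrary, possibly infinite, dimension) equipped with a symmetric $d$-linear map $\mu: A^d\to A$. If $A$ is Yagzhev nil, then $A$ is Engel. More precisely, if $A$ is Yagzhev nil of nilindex $p$, then $A$ is $n$-Engel for $$n = d\left\lfloor \frac{p-2}{d-1}\right\rfloor + 1.$$
   Context: The map $\mu$ is symmetric: $\mu(x_1,\dots,x_d)=\mu(x_{\sigma(1)},\dots,x_{\sigma(d)})$ for all $\sigma\in S_d$ and all $x_i\in A$. For $x,y\in A$ define $\mathrm{ad}_x(y)=\mu(x,\dots,x,y)$ (with $d-1$ copies of $x$), $\mathrm{ad}_x^1=\mathrm{ad}_x$, and $\mathrm{ad}_x^{k+1}(y)=\mu(x,\dots,x,\mathrm{ad}_x^k(y))$. The algebra $(A,\mu)$ is called $n$-Engel if $\mathrm{ad}_x^n(y)=0$ for all $x,y\in A$, and Engel if it is $n$-Engel for some positive integer $n$. Define maps $T_q:A\to A$ for positive integers $q$ recursively by $T_1(x)=x$ and, for $q>1$, $T_q(x)=\sum \mu(T_{i_1}(x),\dots,T_{i_d}(x))$, where the sum runs over all $d$-tuples $(i_1,\dots,i_d)$ of positive integers with $i_1+\dots+i_d=q$. The algebra $A$ is called Yagzhev nil of nilindex $p$ (for a positive integer $p$) if $T_q(x)=0$ for all $x\in A$ and all integers $q\ge p$; it is called Yagzhev nil if it is Yagzhev nil of nilindex $p$ for some $p$. *)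

From HB Require Import structures.
From mathcomp Require Import all_boot all_order all_algebra all_fingroup.
Set Implicit Arguments.
Unset Strict Implicit.
Unset Printing Implicit Defensive.
Import GRing.Theory.
Local Open Scope ring_scope.

Section DAry.
Variables (k : fieldType) (A : lmodType k) (d : nat).
Variable mu : {ffun 'I_d -> A} -> A.

Definition multilinear : Prop :=
  forall (i : 'I_d) (f : {ffun 'I_d -> A}) (a : k) (x y : A),
    mu [ffun j => if j == i then a *: x + y else f j] =
    a *: mu [ffun j => if j == i then x else f j] + mu [ffun j => if j == i then y else f j].

Definition symmetric_op : Prop :=
  forall (s : 'S_d) (f : {ffun 'I_d -> A}), mu [ffun j => f (s j)] = mu f.

Definition ad (x y : A) : A :=
  mu [ffun j : 'I_d => if (j : nat) == d.-1 then y else x].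

Definition adn (n : nat) (x y : A) : A := iter n (ad x) y.

Definition n_Engel (n : nat) : Prop := forall x y : A, adn n x y = 0.

Definition Engel : Prop := exists n, (0 < n)%N /\ n_Engel n.

(* T_q, defined with fuel; T q x := Tfuel q q x. For d >= 2 each index
   i_j occurring in the sum defining T_q satisfies i_j <= q - 1, so fuel q
   suffices. *)
Fixpoint Tfuel (fuel q : nat) (x : A) : A :=
  match fuel with
  | O => 0
  | fuel'.+1 =>
      if q == 1%N then x else
      \sum_(t : {ffun 'I_d -> 'I_q.+1} |
              [forall j, (0 < (t j : nat))%N] && ((\sum_(j < d) (t j : nat))%N == q))
         mu [ffun j => Tfuel fuel' (t j) x]
  end.

Definition T (q : nat) (x : A) : A := Tfuel q q x.

Definition Yagzhev_nil_index (p : nat) : Prop :=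
  (0 < p)%N /\ forall (x : A) (q : nat), (p <= q)%N -> T q x = 0.

Definition Yagzhev_nil : Prop := exists p, Yagzhev_nil_index p.

End DAry.

From HB Require Import structures.
From mathcomp Require Import all_boot all_order all_algebra all_fingroup.
From mathcomp Require Import zify.
Set Implicit Arguments.
Unset Strict Implicit.
Unset Printing Implicit Defensive.
Import GRing.Theory.
Local Open Scope ring_scope.

(* Let F(x) = \sum_(q < p) T_q(x).  Since T_q = 0 for q >= p, the recursion
   defining the T_q gives the fixed-point identity F(x) = x + mu(F(x), ..., F(x)).
   Evaluate it on the curve x(l) = l y - l^d mu(y, ..., y) + l^K z with K large.
   By multilinearity T_q(x(l)) is a polynomial in l, and as k is infinite the
   identity holds coefficientwise: the coefficients R_n of F(x(l)) satisfy
   R = X + conv(R, ..., R), where X are the coefficients of x(l).  Below degree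
   2K this recursion forces R_1 = y, R_(K + (d-1)j) = d^j ad_y^j z and R_n = 0
   otherwise.  On the other hand a monomial of T_q(x(l)) containing z exactly
   once has degree between K and K + d(q-1), and T_q = 0 unless q = 1 mod d-1;
   for q < p this forces R_(K + (d-1)n) = 0 when n = d ((p-2) %/ (d-1)) + 1. *)

Lemma sum_if_eq (V : nmodType) (T : finType) (P : pred T) (a : T) (v : V) :
  \sum_(s | P s) (if s == a then v else 0) = if P a then v else 0.
Proof.
rewrite -big_mkcondr; case: ifP => Pa; [apply: (big_pred1 a) | apply: big_pred0] => s /=;
  by case: eqP => [->|]; rewrite ?Pa ?andbF.
Qed.

Lemma sum_ffun_if_vals (V : nmodType) d n (t : 'I_d -> nat) (v : V) : (forall j, t j <= n)%N ->
  \sum_(s : {ffun 'I_d -> 'I_n.+1} | (\sum_j s j)%N == n)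
     (if [forall j, s j == t j :> nat] then v else 0)
  = if (\sum_j t j)%N == n then v else 0.
Proof.
move=> le_tn; pose s0 : {ffun 'I_d -> 'I_n.+1} := [ffun j => inord (t j)].
have s0E j : s0 j = t j :> nat by rewrite ffunE inordK // ltnS.
rewrite (eq_bigr (fun s => if s == s0 then v else 0)) => [|s _].
  by rewrite sum_if_eq (eq_bigr t) // => j _; apply: s0E.
congr (if _ then _ else _); apply/forallP/eqP => [st|-> j]; last by rewrite s0E.
by apply/ffunP => j; apply: val_inj => /=; rewrite s0E; apply/eqP.
Qed.

Lemma leq_summand d (t : 'I_d -> nat) j : (t j <= \sum_i t i)%N.
Proof. by rewrite (bigD1 j) //= leq_addr. Qed.

Lemma one_high_summands d K (t : 'I_d -> nat) :
  (forall j, t j = 1%N \/ (K <= t j)%N) -> (\sum_j t j < 2 * K)%N ->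
  (forall j, t j = 1%N) \/ exists2 j0, (K <= t j0)%N & forall j, j != j0 -> t j = 1%N.
Proof.
move=> t1K lt_sum; have [/forallP t1|/forallPn [j0 tj0]] := boolP [forall j, t j == 1%N].
  by left => j; apply/eqP.
have le_K0 : (K <= t j0)%N by case: (t1K j0) => // tj01; move: tj0; rewrite tj01.
right; exists j0 => // j ne; case: (t1K j) => // le_K.
move: lt_sum; rewrite ltnNge mul2n -addnn (bigD1 j0) //= (bigD1 j) //= => /negP[].
by rewrite addnA (leq_trans (leq_add le_K0 le_K)) ?leq_addr.
Qed.

Section CoefficientSequences.
Variables (k : fieldType) (A : lmodType k).

Definition peval B (c : nat -> A) (l : k) : A := \sum_(n < B) l ^+ n *: c n.

Lemma peval_widen B1 B2 c l : (B1 <= B2)%N -> (forall n, (B1 <= n)%N -> c n = 0) ->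
  peval B2 c l = peval B1 c l.
Proof.
move=> le_B c0; rewrite /peval (big_ord_widen _ (fun n => l ^+ n *: c n) le_B).
rewrite [LHS](bigID (fun n : 'I_B2 => (n < B1)%N)) /= [X in _ + X]big1 ?addr0 //.
by move=> n; rewrite -leqNgt => /c0 ->; rewrite scaler0.
Qed.

Lemma peval_sum (I : finType) (P : pred I) B (c : I -> nat -> A) l :
  peval B (fun n => \sum_(i | P i) c i n) l = \sum_(i | P i) peval B (c i) l.
Proof. by rewrite /peval exchange_big; apply: eq_bigr => n _; rewrite scaler_sumr. Qed.

Lemma peval_sub B a b l : peval B (fun n => a n - b n) l = peval B a l - peval B b l.
Proof. by rewrite /peval -sumrB; apply: eq_bigr => n _; rewrite scalerBr. Qed.

Lemma peval_coef_eq0 B (c : nat -> A) : [pchar k] =i pred0 ->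
  (forall l, peval B c l = 0) -> forall n, (n < B)%N -> c n = 0.
Proof.
move=> char0 c0 n lt_nB.
pose V := Vandermonde B (\row_(i < B) (i%:R : k)).
have V_unit : V \in unitmx.
  rewrite unitmxE det_Vandermonde unitfE; apply/prodf_neq0 => i _; apply/prodf_neq0 => j lt_ij.
  by rewrite !mxE -natrB ?(ltnW lt_ij) // ((pcharf0P _).1 char0) subn_eq0 -ltnNge.
have -> : c n = \sum_(i < B) (V *m invmx V) i (Ordinal lt_nB) *: c i.
  rewrite mulmxV // (bigD1 (Ordinal lt_nB)) //= mxE eqxx scale1r big1 ?addr0 // => i ne.
  by rewrite mxE (negbTE ne) scale0r.
under eq_bigr do rewrite mxE scaler_suml.
rewrite exchange_big big1 //= => j _; under eq_bigr do rewrite mulrC -scalerA.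
rewrite -scaler_sumr.
have -> : \sum_(i < B) V i j *: c i = peval B c j%:R by apply: eq_bigr => i _; rewrite !mxE.
by rewrite c0 scaler0.
Qed.

End CoefficientSequences.

Section Multilinear.
Variables (k : fieldType) (A : lmodType k) (d : nat) (mu : {ffun 'I_d -> A} -> A).
Hypothesis mu_lin : multilinear mu.

Definition upd (f : {ffun 'I_d -> A}) (i : 'I_d) (x : A) : {ffun 'I_d -> A} :=
  [ffun j => if j == i then x else f j].

Lemma upd_id f i : upd f i (f i) = f.
Proof. by apply/ffunP => j; rewrite ffunE; case: eqP => // ->. Qed.

Definition mu_slot f i x := mu (upd f i x).

Fact mu_slot_is_linear f i : linear (mu_slot f i).
Proof. by move=> a x y; apply: mu_lin. Qed.

HB.instance Definition _ f i :=
  GRing.isLinear.Build k A A *:%R (mu_slot f i) (mu_slot_is_linear f i).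

Lemma mu_eq0 (f : {ffun 'I_d -> A}) (i : 'I_d) : f i = 0 -> mu f = 0.
Proof. by move=> fi0; rewrite -(upd_id f i) fi0 -/(mu_slot f i 0) raddf0. Qed.

Lemma mu_scale_on (S : seq 'I_d) (a : 'I_d -> k) (v : 'I_d -> A) :
  (forall j, j \notin S -> a j = 1) ->
  mu [ffun j => a j *: v j] = (\prod_j a j) *: mu [ffun j => v j].
Proof.
elim: S a => [|j0 S IH] a a1.
  rewrite big1 ?scale1r => [|j _]; last exact: a1.
  by congr mu; apply/ffunP => j; rewrite !ffunE a1 ?scale1r.
pose a' j := if j == j0 then 1 else a j.
have -> : [ffun j => a j *: v j] = upd [ffun j => a' j *: v j] j0 (a j0 *: v j0).
  by apply/ffunP => j; rewrite !ffunE /a'; case: eqP => // ->.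
rewrite -/(mu_slot _ _ _) linearZ /= /mu_slot.
have -> : upd [ffun j => a' j *: v j] j0 (v j0) = [ffun j => a' j *: v j].
  by apply/ffunP => j; rewrite !ffunE /a'; case: eqP => [->|]; rewrite ?eqxx ?scale1r.
rewrite IH => [|j jS]; last first.
  by rewrite /a'; case: eqP => // /eqP ne; apply: a1; rewrite in_cons negb_or ne.
rewrite scalerA (bigD1 j0) //= [in RHS](bigD1 j0) //= {1}/a' eqxx mul1r.
by congr (_ * _ *: _); apply: eq_bigr => j /negbTE; rewrite /a' => ->.
Qed.

Lemma mu_scale (a : 'I_d -> k) (v : 'I_d -> A) :
  mu [ffun j => a j *: v j] = (\prod_j a j) *: mu [ffun j => v j].
Proof. by apply: (mu_scale_on (S := enum 'I_d)) => j; rewrite mem_enum. Qed.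

Lemma mu_sum_on (I : finType) (S : seq 'I_d) (g : 'I_d -> I -> A) :
  (forall j, j \notin S -> exists i, forall i', i' != i -> g j i' = 0) ->
  mu [ffun j => \sum_i g j i] = \sum_(s : {ffun 'I_d -> I}) mu [ffun j => g j (s j)].
Proof.
elim: S g => [|j0 S IH] g g1.
  have [s0 Hs0] : exists s0 : {ffun 'I_d -> I}, forall j i, i != s0 j -> g j i = 0.
    have [f Hf] := fin_all_exists (fun j => g1 j isT).
    by exists [ffun j => f j] => j i; rewrite ffunE; apply: Hf.
  rewrite (bigD1 s0) //= big1 ?addr0 => [|s ne]; last first.
    have /existsP [j sj] : [exists j, s j != s0 j].
      by apply: contraR ne => /existsPn e; apply/eqP/ffunP => j; apply/eqP/negPn/e.
    by apply: (mu_eq0 (i := j)); rewrite ffunE; apply: Hs0.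
  by congr mu; apply/ffunP => j; rewrite !ffunE (bigD1 (s0 j)) //= big1 ?addr0 // => i /Hs0.
pose gi i j i' := if j == j0 then (if i' == i then g j0 i else 0) else g j i'.
rewrite -(upd_id [ffun j => \sum_i g j i] j0) ffunE -/(mu_slot _ _ _) raddf_sum /=.
rewrite [RHS](partition_big (fun s : {ffun 'I_d -> I} => s j0) xpredT) //=.
apply: eq_bigr => i _.
have -> : mu_slot [ffun j => \sum_i0 g j i0] j0 (g j0 i) = mu [ffun j => \sum_i' gi i j i'].
  congr mu; apply/ffunP => j; rewrite !ffunE /gi; case: eqP => // _.
  by rewrite (bigD1 i) //= eqxx big1 ?addr0 // => i' /negbTE ->.
rewrite IH => [|j]; last first.
  move=> jS; rewrite /gi; case: eqP => [_|/eqP ne]; first by exists i => i' /negbTE ->.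
  by apply: g1; rewrite in_cons negb_or ne.
rewrite [LHS](bigID (fun s : {ffun 'I_d -> I} => s j0 == i)) /= [X in _ + X]big1 ?addr0.
  apply: eq_bigr => s /eqP si; congr mu; apply/ffunP => j; rewrite !ffunE /gi.
  by case: eqP => // ->; rewrite si eqxx.
by move=> s /negbTE si; apply: (mu_eq0 (i := j0)); rewrite ffunE /gi eqxx si.
Qed.

Lemma mu_sum (I : finType) (g : 'I_d -> I -> A) :
  mu [ffun j => \sum_i g j i] = \sum_(s : {ffun 'I_d -> I}) mu [ffun j => g j (s j)].
Proof. by apply: (mu_sum_on (S := enum 'I_d)) => j; rewrite mem_enum. Qed.

(* [conv c n] is the coefficient of l^n in mu(c_1(l), ..., c_d(l)) (see
   [mu_peval]); [conv_in m] only takes the parts below m into account. *)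
Definition conv_in m (c : 'I_d -> nat -> A) n : A :=
  \sum_(s : {ffun 'I_d -> 'I_m} | (\sum_j s j)%N == n) mu [ffun j => c j (s j)].

Definition conv (c : 'I_d -> nat -> A) n : A := conv_in n.+1 c n.

Lemma mu_sum_conv B (g : 'I_d -> nat -> A) :
  mu [ffun j => \sum_(i < B.+1) g j i] = \sum_(n < (d * B).+1) conv_in B.+1 g n.
Proof.
have sum_lt (s : {ffun 'I_d -> 'I_B.+1}) : (\sum_j s j < (d * B).+1)%N.
  rewrite ltnS -[d in (_ <= d * _)%N]card_ord -sum_nat_const.
  by apply: leq_sum => j _; rewrite -ltnS.
by rewrite mu_sum (partition_big (fun s => Ordinal (sum_lt s)) xpredT).
Qed.

Lemma conv_in_widen m1 m2 c n : (m1 <= m2)%N ->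
  (forall j i, (m1 < i <= n)%N -> c j i = 0) -> conv_in m2.+1 c n = conv_in m1.+1 c n.
Proof.
move=> le_m c0; rewrite /conv_in.
rewrite (bigID (fun s : {ffun 'I_d -> 'I_m2.+1} => [forall j, s j <= m1]%N)) /=.
rewrite [X in _ + X]big1 ?addr0 => [|s /andP[/eqP sum_s /forallPn[j]]]; last first.
  rewrite -ltnNge => lt_j; apply: (mu_eq0 (i := j)); rewrite ffunE c0 //.
  by rewrite lt_j -sum_s (leq_summand (fun j => s j : nat)).
have le_m' : (m1.+1 <= m2.+1)%N by [].
rewrite (reindex_onto (fun s : {ffun 'I_d -> 'I_m1.+1} => [ffun j => widen_ord le_m' (s j)])
                      (fun s => [ffun j => inord (s j)])) /=; last first.
  move=> s /andP[_ /forallP le_s]; apply/ffunP => j; apply: val_inj.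
  by rewrite !ffunE /= inordK ?ltnS ?le_s.
apply: eq_big => [s|s _]; last by congr mu; apply/ffunP => j; rewrite !ffunE.
rewrite (eq_bigr (fun j => s j : nat)) => [|j _]; last by rewrite ffunE.
have -> : [forall j, [ffun j => widen_ord le_m' (s j)] j <= m1]%N.
  by apply/forallP => j; rewrite ffunE /= -ltnS.
rewrite andbT; case: eqP => //= _; apply/eqP/ffunP => j; apply: val_inj.
by rewrite !ffunE /= inord_val.
Qed.

Lemma conv_inE m c n :
  (forall j i, (m < i <= n)%N -> c j i = 0) -> conv_in m.+1 c n = conv c n.
Proof.
move=> c0; rewrite /conv -(@conv_in_widen m (m + n)) ?leq_addr // (@conv_in_widen n (m + n)) //.
  by rewrite leq_addl.
by move=> j i /andP[lt_ni le_in]; move: (leq_ltn_trans le_in lt_ni); rewrite ltnn.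
Qed.

Lemma conv_eq0_lt c n : (forall j, c j 0 = 0) -> (n < d)%N -> conv c n = 0.
Proof.
move=> c0 lt_nd; apply: big1 => s /eqP sum_s.
have /existsP [j /eqP sj0] : [exists j, s j == 0 :> nat].
  apply: contraLR lt_nd => /existsPn s_pos; rewrite -leqNgt -sum_s.
  rewrite -[d in (d <= _)%N]card_ord -sum1_card; apply: leq_sum => j _.
  by rewrite lt0n s_pos.
by apply: (mu_eq0 (i := j)); rewrite ffunE sj0 c0.
Qed.

Lemma mu_peval B (c : 'I_d -> nat -> A) l : (forall j n, (B < n)%N -> c j n = 0) ->
  mu [ffun j => peval B.+1 (c j) l] = peval (d * B).+1 (conv c) l.
Proof.
move=> c0; rewrite /peval (mu_sum_conv B (fun j i => l ^+ i *: c j i)); apply: eq_bigr => n _.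
rewrite -(@conv_inE B) => [|j i /andP[lt_Bi _]]; last exact: c0.
rewrite /conv_in scaler_sumr; apply: eq_bigr => s /eqP sum_s.
by rewrite (mu_scale (fun j => l ^+ s j) (fun j => c j (s j))) prodrXr sum_s.
Qed.

(* The coefficients of [Tfuel mu f q] at the polynomial with coefficients X
   (see [Tfuel_peval]). *)
Fixpoint Tcoef (X : nat -> A) fuel q : nat -> A :=
  match fuel with
  | O => fun=> 0
  | fuel'.+1 =>
      if q == 1%N then X else fun n =>
      \sum_(t : {ffun 'I_d -> 'I_q.+1} |
              [forall j, (0 < (t j : nat))%N] && ((\sum_(j < d) (t j : nat))%N == q))
         conv (fun j => Tcoef X fuel' (t j)) n
  end.

Lemma Tcoef_eq0 (G : nat -> nat -> bool) X f q n :
  (forall n, ~~ G 1%N n -> X n = 0) ->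
  (forall t s : 'I_d -> nat, (forall j, G (t j) (s j)) -> G (\sum_j t j)%N (\sum_j s j)%N) ->
  ~~ G q n -> Tcoef X f q n = 0.
Proof.
move=> X0 G_sum; elim: f q n => [//|f IH] q n /=; case: eqP => [-> /X0 //|_ Gqn].
apply: big1 => t /andP[_ /eqP sum_t]; apply: big1 => s /eqP sum_s.
have /forallPn [j /IH Tj0] : ~~ [forall j, G (t j) (s j)].
  by apply: contra Gqn => /forallP /G_sum; rewrite sum_t sum_s.
by apply: (mu_eq0 (i := j)); rewrite ffunE Tj0.
Qed.

Lemma Tcoef_deg X D f q n : (forall n, (D < n)%N -> X n = 0) ->
  (D * q < n)%N -> Tcoef X f q n = 0.
Proof.
move=> X0 lt_n; apply: (@Tcoef_eq0 (fun q n => n <= D * q)%N) => [m|t s le_ts|].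
- by rewrite muln1 -ltnNge; apply: X0.
- by rewrite big_distrr; apply: leq_sum => j _.
- by rewrite -ltnNge.
Qed.

Lemma Tfuel_peval X D f q l : (0 < d)%N -> (forall n, (D < n)%N -> X n = 0) ->
  Tfuel mu f q (peval D.+1 X l) = peval (D * q).+1 (Tcoef X f q) l.
Proof.
move=> d_gt0 X0; elim: f q => [|f IH] q.
  by rewrite /= /peval big1 // => n _; rewrite scaler0.
have [->|q1] := eqVneq q 1%N; first by rewrite /= muln1.
rewrite -(@peval_widen _ _ (D * q).+1 (d * (D * q)).+1); first last.
- by move=> n; apply: Tcoef_deg.
- by rewrite ltnS leq_pmull.
rewrite /= (negbTE q1) peval_sum; apply: eq_bigr => t /andP[_ /eqP sum_t].
have le_t j : (D * t j <= D * q)%N.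
  by rewrite leq_mul2l -[X in (_ <= X)%N]sum_t (leq_summand (fun j => t j : nat)) orbT.
rewrite -mu_peval => [|j n lt_n]; last exact: Tcoef_deg X0 (leq_ltn_trans (le_t j) lt_n).
congr mu; apply/ffunP => j; rewrite !ffunE IH (@peval_widen _ _ (D * t j).+1) ?ltnS //.
by move=> n; apply: Tcoef_deg.
Qed.

Section AtLeastBinary.
Hypothesis d_gt1 : (1 < d)%N.

Fact predn_d_gt0 : (0 < d.-1)%N.
Proof. by rewrite -ltnS prednK // ltnW. Qed.

Lemma lt_summand (t : 'I_d -> nat) j : (forall i, 0 < t i)%N -> (t j < \sum_i t i)%N.
Proof.
move=> t_pos; have /card_gt0P [j' ne] : (0 < #|predC1 j|)%N.
  by rewrite cardC1 card_ord -ltnS prednK // ltnW.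
by rewrite (bigD1 j) //= (bigD1 j') //=; have := t_pos j'; lia.
Qed.

Lemma Tfuel_0 f x : Tfuel mu f 0 x = 0.
Proof.
case: f => [//|f] /=; apply: big1 => t /andP[/forallP t_pos /eqP sum_t].
by have := lt_summand (Ordinal (ltnW d_gt1)) t_pos; rewrite sum_t.
Qed.

Lemma Tfuel_eq f1 f2 q x : (q <= f1)%N -> (q <= f2)%N -> Tfuel mu f1 q x = Tfuel mu f2 q x.
Proof.
elim: f1 f2 q => [|f1 IH] f2 q le1 le2.
  by move: le1; rewrite leqn0 => /eqP ->; rewrite !Tfuel_0.
case: f2 le2 => [|f2] le2; first by move: le2; rewrite leqn0 => /eqP ->; rewrite !Tfuel_0.
rewrite /=; case: (q == 1%N) => //; apply: eq_bigr => t /andP[/forallP t_pos /eqP sum_t].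
congr mu; apply/ffunP => j; rewrite !ffunE.
by have := lt_summand j t_pos; rewrite sum_t => lt_t; apply: IH; lia.
Qed.

Lemma T_conv q x : (1 < q)%N -> T mu q x = conv (fun _ m => T mu m x) q.
Proof.
case: q => [//|q] lt_1q; rewrite /T /= ifF; last by apply/eqP; lia.
rewrite /conv /conv_in.
rewrite [RHS](bigID (fun t : {ffun 'I_d -> 'I_q.+2} => [forall j, 0 < (t j : nat)]%N)) /=.
rewrite [X in _ = _ + X]big1 ?addr0 => [|t /andP[_ /forallPn [j]]]; last first.
  by rewrite -eqn0Ngt => /eqP tj0; apply: (mu_eq0 (i := j)); rewrite ffunE tj0.
apply: eq_big => [t|t /andP[/forallP t_pos /eqP sum_t]]; first by rewrite andbC.
congr mu; apply/ffunP => j; rewrite !ffunE /T.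
by have := lt_summand j t_pos; rewrite sum_t => lt_t; apply: Tfuel_eq.
Qed.

Lemma conv_T x n : conv (fun _ m => T mu m x) n = T mu n x - (if n == 1%N then x else 0).
Proof.
have [lt_1n|le_n1] := ltnP 1 n.
  by rewrite T_conv // ifF ?subr0 //; apply/negbTE; rewrite neq_ltn lt_1n orbT.
rewrite conv_eq0_lt ?(leq_ltn_trans le_n1 d_gt1) //.
by case: n le_n1 => [|[|]] //= _; rewrite ?subrr ?subr0.
Qed.

Lemma eq_conv_lt (c c' : nat -> A) n : c 0%N = 0 -> c' 0%N = 0 ->
  (forall m, (m < n)%N -> c m = c' m) -> conv (fun=> c) n = conv (fun=> c') n.
Proof.
move=> c0 c'0 eq_cc'; apply: eq_bigr => s /eqP sum_s.
have [/existsP [j /eqP sj0]|/existsPn s_pos] := boolP [exists j, s j == 0%N :> nat].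
  by rewrite (mu_eq0 (i := j)) ?(mu_eq0 (i := j)) // ffunE sj0.
congr mu; apply/ffunP => j; rewrite !ffunE eq_cc' //.
have s_pos' i : (0 < s i)%N by rewrite lt0n s_pos.
by have := lt_summand j s_pos'; rewrite sum_s.
Qed.

Lemma conv_fix_unique (X c c' : nat -> A) N : c 0%N = 0 -> c' 0%N = 0 ->
  (forall n, (0 < n < N)%N -> c n = X n + conv (fun=> c) n) ->
  (forall n, (0 < n < N)%N -> c' n = X n + conv (fun=> c') n) ->
  forall n, (n < N)%N -> c n = c' n.
Proof.
move=> c0 c'0 c_fix c'_fix; elim/ltn_ind => [[_|n IH lt_nN]]; first by rewrite c0 c'0.
rewrite c_fix // c'_fix // (eq_conv_lt c0 c'0) // => m lt_m.
by apply: IH => //; apply: ltn_trans lt_nN.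
Qed.

Section Symmetric.
Hypothesis mu_sym : symmetric_op mu.

Lemma mu_upd_ad (y v : A) (j0 : 'I_d) : mu (upd [ffun=> y] j0 v) = ad mu y v.
Proof.
have lt_d1 : (d.-1 < d)%N by rewrite prednK // ltnW.
pose j1 := Ordinal lt_d1.
rewrite /ad -(mu_sym (tperm j0 j1)); congr mu; apply/ffunP => j; rewrite !ffunE.
have -> : (tperm j0 j1 j == j0) = (j == j1).
  by apply/eqP/eqP => [e|->]; [rewrite -(tpermK j0 j1 j) e tpermL | apply: tpermR].
by rewrite -val_eqE.
Qed.

Lemma adZ y a v : ad mu y (a *: v) = a *: ad mu y v.
Proof.
have j0 : 'I_d by exists 0%N; apply: ltnW.
by rewrite -!(mu_upd_ad _ _ j0) -/(mu_slot _ _ _) linearZ.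
Qed.

(* Only the tuple (1, ..., 1) and the tuples with one entry n - (d - 1) >= K
   and all others 1 contribute. *)
Lemma mu_one_high (y : A) K (c : nat -> A) (t : 'I_d -> nat) n :
  (1 < K)%N -> c 0%N = 0 -> c 1%N = y -> (forall m, (1 < m < K)%N -> c m = 0) ->
  (\sum_j t j)%N = n -> (n < 2 * K)%N ->
  mu [ffun j => c (t j)] =
    (if [forall j, t j == 1%N] then mu [ffun=> y] else 0)
    + \sum_j0 (if [forall j, t j == if j == j0 then (n - d.-1)%N else 1%N]
               then (if (K + d.-1 <= n)%N then ad mu y (c (n - d.-1)%N) else 0) else 0).
Proof.
move=> lt_1K c0 c1 c_mid sum_t lt_n2K.
have [/existsP [j /andP[tj1 tjK]] | /existsPn t1K] := boolP [exists j, (t j != 1%N) && (t j < K)%N].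
  rewrite (mu_eq0 (i := j)); last first.
    by rewrite ffunE; case: (posnP (t j)) => [->//|tj_gt0]; apply: c_mid; lia.
  rewrite ifF ?add0r; last by apply: contraNF tj1 => /forallP; apply.
  apply/esym/big1 => j0 _; case: ifP => // /forallP /(_ j) /eqP.
  by case: ifP => _ tjE; [rewrite ifF //; lia | rewrite tjE in tj1].
have t1K' j : t j = 1%N \/ (K <= t j)%N.
  by have := t1K j; rewrite negb_and negbK -leqNgt => /orP[/eqP|]; [left|right].
case: (one_high_summands t1K'); first by rewrite sum_t.
  move=> t1; have nd : n = d by rewrite -sum_t (eq_bigr (fun=> 1%N)) ?sum1_card ?card_ord.
  have -> : [forall j, t j == 1%N] by apply/forallP => j; rewrite t1.
  have -> : (K + d.-1 <= n)%N = false by lia.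
  rewrite big1 ?addr0 => [|j0 _]; last by rewrite if_same.
  by congr mu; apply/ffunP => j; rewrite !ffunE t1 c1.
case=> j0 le_Ktj0 t1.
have tj0 : t j0 = (n - d.-1)%N.
  move: sum_t; rewrite (bigD1 j0) //= (eq_bigr (fun=> 1%N)) => [|j /t1 //].
  by rewrite sum1dep_card cardsE cardC1 card_ord; lia.
rewrite ifF ?add0r; last by apply/negbTE/forallPn; exists j0; apply/eqP; lia.
rewrite (bigD1 j0) //= big1 ?addr0 => [|j1 ne]; last first.
  rewrite ifF //; apply/negbTE/forallPn; exists j0.
  by rewrite [j0 == _]eq_sym (negbTE ne); apply/eqP; lia.
have -> : [forall j, t j == (if j == j0 then (n - d.-1)%N else 1%N)].
  by apply/forallP => j; case: ifP => [/eqP ->|/negbT /t1 ->]; rewrite ?tj0.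
rewrite ifT; last by lia.
rewrite -(mu_upd_ad _ _ j0); congr mu; apply/ffunP => j; rewrite !ffunE.
by case: eqP => [->|/eqP /t1 ->]; rewrite ?tj0 ?c1.
Qed.

Lemma conv_one_high (y : A) K (c : nat -> A) n :
  (1 < K)%N -> c 0%N = 0 -> c 1%N = y -> (forall m, (1 < m < K)%N -> c m = 0) ->
  (0 < n < 2 * K)%N ->
  conv (fun=> c) n = (if n == d then mu [ffun=> y] else 0)
                     + (if (K + d.-1 <= n)%N then d%:R *: ad mu y (c (n - d.-1)%N) else 0).
Proof.
move=> lt_1K c0 c1 c_mid /andP[n_gt0 lt_n2K].
rewrite /conv /conv_in.
rewrite (eq_bigr _ (fun s sum_s => mu_one_high lt_1K c0 c1 c_mid (eqP sum_s) lt_n2K)).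
rewrite big_split exchange_big /= sum_ffun_if_vals // eq_sym (eq_bigr (fun=> 1%N)) //.
rewrite big_const_ord iter_addn_0 mul1n; congr (_ + _).
set W := (if _ then _ else _ : A).
rewrite (eq_bigr (fun j0 =>
  if (\sum_j (if j == j0 then n - d.-1 else 1) == n)%N then W else 0)); last first.
  by move=> j0 _; rewrite sum_ffun_if_vals // => j; case: ifP; rewrite ?leq_subr.
rewrite /W; case: ifP => [le_n|_]; last by rewrite big1 // => j0 _; rewrite if_same.
rewrite scaler_nat -[X in _ *+ X](card_ord d) -sumr_const; apply: eq_bigr => j0 _; rewrite ifT //.
rewrite (bigD1 j0) //= eqxx (eq_bigr (fun=> 1%N)) => [|j /negbTE -> //].
by rewrite sum1dep_card cardsE cardC1 card_ord subnK ?eqxx //; lia.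
Qed.

Section Nil.
Variable p : nat.
Hypothesis p_nil : Yagzhev_nil_index mu p.

Definition Tsum x := \sum_(q < p) T mu q x.

Lemma Tsum_widen B x : (p <= B)%N -> Tsum x = \sum_(q < B) T mu q x.
Proof.
move=> le_pB; rewrite /Tsum (big_ord_widen _ (fun q => T mu q x) le_pB).
rewrite [RHS](bigID (fun q : 'I_B => (q < p)%N)) /=.
by rewrite [X in _ = _ + X]big1 ?addr0 // => q; rewrite -leqNgt; apply: p_nil.2.
Qed.

Lemma mu_Tsum x : mu [ffun=> Tsum x] = Tsum x - x.
Proof.
have p_gt0 := p_nil.1.
rewrite {1}(Tsum_widen x (leqnSn p)) (mu_sum_conv p (fun _ i => T mu i x)).
rewrite (eq_bigr (fun n : 'I_(d * p).+1 => T mu n x - (if (n : nat) == 1%N then x else 0)));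
  last first.
  by move=> n _; rewrite conv_inE ?conv_T // => j i /andP[lt_pi _]; apply: p_nil.2; apply: ltnW.
rewrite sumrB -Tsum_widen; last exact: leq_trans (leq_pmull p (ltnW d_gt1)) (leqnSn _).
have lt_1 : (1 < (d * p).+1)%N by rewrite ltnS muln_gt0 p_gt0 ltnW.
by rewrite (bigD1 (Ordinal lt_1)) //= big1 ?addr0 // => n /negbTE; rewrite -val_eqE /= => ->.
Qed.

Section Engel.
Hypothesis char0 : [pchar k] =i pred0.
Variables (y z : A) (K : nat).
Hypothesis d_lt_K : (d < K)%N.

(* The coefficients of x(l) = l y - l^d mu(y, ..., y) + l^K z; the l^d term
   cancels mu(l y, ..., l y) in the fixed-point identity. *)
Definition xcoef n : A :=
  (if n == 1%N then y else 0) - (if n == d then mu [ffun=> y] else 0) + (if n == K then z else 0).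

Definition Tcoef_x q := Tcoef xcoef q q.

Definition Tsum_coef n := \sum_(q < p) Tcoef_x q n.

Lemma xcoef_gt n : (K < n)%N -> xcoef n = 0.
Proof. by move=> lt_Kn; rewrite /xcoef !ifF ?subrr ?addr0 //; apply/eqP; lia. Qed.

Lemma Tsum_coef_gt n : (K * p < n)%N -> Tsum_coef n = 0.
Proof.
move=> lt_n; apply: big1 => q _; apply: Tcoef_deg xcoef_gt _.
by apply: leq_ltn_trans lt_n; rewrite leq_mul2l ltnW ?orbT.
Qed.

Lemma Tsum_peval l : Tsum (peval K.+1 xcoef l) = peval (K * p).+1 Tsum_coef l.
Proof.
rewrite /Tsum_coef peval_sum; apply: eq_bigr => q _.
rewrite /T Tfuel_peval ?(ltnW d_gt1) //; last exact: xcoef_gt.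
apply: esym; apply: peval_widen => [|n lt_n]; first by rewrite ltnS leq_mul2l ltnW ?orbT.
exact: Tcoef_deg xcoef_gt lt_n.
Qed.

Lemma Tsum_coef_conv n : (n <= d * (K * p))%N -> Tsum_coef n = xcoef n + conv (fun=> Tsum_coef) n.
Proof.
have p_gt0 := p_nil.1; have le_Kp : (K * p <= d * (K * p))%N by rewrite leq_pmull // ltnW.
move=> le_n; apply/eqP; rewrite -subr_eq0 opprD addrA; apply/eqP.
pose c m := Tsum_coef m - xcoef m - conv (fun=> Tsum_coef) m.
apply: (@peval_coef_eq0 _ _ (d * (K * p)).+1 c char0 _ n le_n) => l.
rewrite !peval_sub; set x := peval K.+1 xcoef l.
have -> : peval (d * (K * p)).+1 Tsum_coef l = Tsum x.
  by rewrite Tsum_peval (peval_widen l _ Tsum_coef_gt) // ltnS.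
have -> : peval (d * (K * p)).+1 xcoef l = x.
  by rewrite (peval_widen l _ xcoef_gt) // ltnS (leq_trans _ le_Kp) // leq_pmulr.
have -> : peval (d * (K * p)).+1 (conv (fun=> Tsum_coef)) l = mu [ffun=> Tsum x].
  rewrite -mu_peval => [|_ m /Tsum_coef_gt //].
  by congr mu; apply/ffunP => j; rewrite !ffunE Tsum_peval.
by rewrite mu_Tsum subrr.
Qed.

(* The monomials of T_q(x(l)) without z have degree at most d q, those with
   one z lie between K and K + d (q - 1), the others have degree >= 2 K. *)
Definition window q n := [|| n <= d * q, (K <= n) && (n + d <= K + d * q) | 2 * K <= n]%N.

Definition Tcoef_x_support q n := [&& 0 < n, window q n & q == 1 %[mod d.-1]]%N.

Lemma sum_mod1 (t : 'I_d -> nat) :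
  (forall j, t j = 1 %[mod d.-1])%N -> (\sum_j t j = 1 %[mod d.-1])%N.
Proof.
move=> t1; rewrite -modn_summ (eq_bigr (fun=> 1 %% d.-1)%N) => [|j _]; last by rewrite t1.
by rewrite sum_nat_const card_ord modnMmr muln1 -{1}(prednK (ltnW d_gt1)) -addn1 modnDl.
Qed.

Lemma Tcoef_x_eq0 q n : ~~ Tcoef_x_support q n -> Tcoef_x q n = 0.
Proof.
apply: Tcoef_eq0 => [m|t s supp_ts].
  move=> /negbTE supp0; rewrite /xcoef !ifF ?subrr ?addr0 //; apply/eqP => em;
    by move: supp0; rewrite /Tcoef_x_support /window em eqxx andbT; lia.
have [j0 _] : exists j0 : 'I_d, true by exists (Ordinal (ltnW d_gt1)).
apply/and3P; split.
- by apply: leq_trans (leq_summand (fun j => s j) j0); case/and3P: (supp_ts j0).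
- apply: (big_ind2 window) => [|q1 n1 q2 n2|j _]; rewrite /window ?mulnDr; [lia|lia|].
  by case/and3P: (supp_ts j).
- by apply/eqP/sum_mod1 => j; case/and3P: (supp_ts j) => _ _ /eqP.
Qed.

Lemma Tsum_coef_eq0 n : (forall q, (q < p)%N -> ~~ Tcoef_x_support q n) -> Tsum_coef n = 0.
Proof. by move=> no_q; apply: big1 => q _; apply: Tcoef_x_eq0; apply: no_q. Qed.

Definition adn_coef j : A :=
  if (d.-1 %| j)%N then d%:R ^+ (j %/ d.-1) *: adn mu (j %/ d.-1) y z else 0.

Lemma adn_coef_step i : adn_coef (i + d.-1) = d%:R *: ad mu y (adn_coef i).
Proof.
have d1_gt0 := predn_d_gt0.
rewrite /adn_coef (dvdn_addl _ (dvdnn _)); case: ifP => [dv|_]; last first.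
  by rewrite -[X in ad _ _ X](scale0r (0 : A)) adZ !scale0r scaler0.
by rewrite divnDr ?dvdnn // divnn d1_gt0 addn1 adZ scalerA -exprS.
Qed.

(* The solution of [c = xcoef + conv c] below degree 2 K. *)
Definition Tsum_coef_sol n : A :=
  (if n == 1%N then y else 0) + (if (K <= n)%N then adn_coef (n - K) else 0).

Lemma Tsum_coef_sol_conv n :
  (0 < n < 2 * K)%N -> Tsum_coef_sol n = xcoef n + conv (fun=> Tsum_coef_sol) n.
Proof.
move=> n_range.
have sol0 : Tsum_coef_sol 0%N = 0 by rewrite /Tsum_coef_sol !ifF ?addr0 //; lia.
have sol1 : Tsum_coef_sol 1%N = y by rewrite /Tsum_coef_sol eqxx ifF ?addr0 //; lia.
have sol_mid m : (1 < m < K)%N -> Tsum_coef_sol m = 0.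
  by move=> lt_m; rewrite /Tsum_coef_sol !ifF ?addr0 //; lia.
rewrite (conv_one_high (ltn_trans d_gt1 d_lt_K) sol0 sol1 sol_mid n_range).
rewrite /Tsum_coef_sol /xcoef addrAC addrA subrK -addrA; congr (_ + _).
case: (ltngtP n K) => [lt_nK|lt_Kn|->].
- by rewrite ifF ?addr0 //; lia.
- case: ifP => le_n.
    rewrite ifF ?ifT ?add0r; [|lia|lia].
    by rewrite addr0 -adn_coef_step; congr adn_coef; lia.
  by rewrite addr0 /adn_coef ifF //; apply/negP => /dvdn_leq; lia.
- rewrite ifF; last by lia.
  by rewrite add0r subnn /adn_coef dvdn0 div0n expr0 scale1r.
Qed.

Lemma Tsum_coef_eq_sol n : (n < 2 * K)%N -> Tsum_coef n = Tsum_coef_sol n.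
Proof.
have p_gt0 := p_nil.1.
apply: (conv_fix_unique (X := xcoef)) => [||m /andP[_ lt_m]|]; last exact: Tsum_coef_sol_conv.
- by apply: Tsum_coef_eq0 => q _; rewrite /Tcoef_x_support ltnn.
- by rewrite /Tsum_coef_sol !ifF ?addr0 //; lia.
have le_dp : (2 <= d * p)%N by rewrite (leq_trans d_gt1) // leq_pmulr.
apply: Tsum_coef_conv; rewrite mulnCA mulnC; apply: leq_trans (ltnW lt_m) _.
by rewrite leq_mul2r le_dp orbT.
Qed.

Definition engel_degree := (d * ((p - 2) %/ d.-1) + 1)%N.

Lemma window_gap q : (q < p)%N -> (q == 1 %[mod d.-1])%N ->
  (d.-1 * engel_degree < K)%N -> ~~ window q (K + d.-1 * engel_degree).
Proof.
move=> lt_qp q1; have d1_gt0 := predn_d_gt0; set m := ((p - 2) %/ d.-1)%N.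
have -> : (d.-1 * engel_degree = d * (d.-1 * m) + d.-1)%N by rewrite mulnDr muln1 mulnCA.
rewrite /window; have [->|q_gt0] := posnP q; first by rewrite muln0; lia.
move: q1; rewrite eqn_mod_dvd // => /divnK qE; set r := ((q - 1) %/ d.-1)%N in qE.
have r_le : (r <= m)%N by rewrite leq_div2r //; lia.
have : (d * (d.-1 * r) <= d * (d.-1 * m))%N by rewrite !leq_mul2l r_le !orbT.
have -> : (d * q = d + d * (d.-1 * r))%N.
  by rewrite -[q](subnK q_gt0) -qE mulnDr muln1 [(r * _)%N]mulnC addnC.
lia.
Qed.

Lemma adn_eq0 : (d.-1 * engel_degree < K)%N -> adn mu engel_degree y z = 0.
Proof.
move=> lt_K; have d1_gt0 := predn_d_gt0.
have : Tsum_coef (K + d.-1 * engel_degree) = 0.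
  apply: Tsum_coef_eq0 => q lt_qp; rewrite /Tcoef_x_support.
  have [q1|] := boolP (q == 1 %[mod d.-1])%N; last by rewrite !andbF.
  by rewrite (negbTE (window_gap lt_qp q1 lt_K)) andbF.
rewrite Tsum_coef_eq_sol; last by lia.
rewrite /Tsum_coef_sol ifF ?leq_addr; last by lia.
rewrite add0r addKn /adn_coef dvdn_mulr // mulKn // => /eqP.
rewrite scaler_eq0 expf_eq0 ((pcharf0P _).1 char0).
by case/orP => [/andP[_ /eqP d0]|/eqP //]; lia.
Qed.

End Engel.

End Nil.

End Symmetric.

End AtLeastBinary.

End Multilinear.

Local Close Scope ring_scope.

Theorem mainTheorem1 (k : fieldType) (A : lmodType k) (d : nat)
    (mu : {ffun 'I_d -> A} -> A) (p : nat) :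
  (GRing.pchar k) =i pred0 ->
  (2 <= d)%N ->
  multilinear mu ->
  symmetric_op mu ->
  Yagzhev_nil_index mu p ->
  Engel mu /\ n_Engel mu (d * ((p - 2) %/ (d - 1)) + 1)%N.
Proof.
move=> char0 d_gt1 mu_lin mu_sym p_nil.
have engel : n_Engel mu (engel_degree d p).
  move=> y z; set n := engel_degree d p.
  by apply: (adn_eq0 mu_lin d_gt1 mu_sym p_nil char0 y z (K := d.-1 * n + d.+1)); lia.
rewrite /engel_degree -subn1 in engel.
by split=> //; exists (d * ((p - 2) %/ (d - 1)) + 1); split=> //; rewrite addn1.
Qed.
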